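(* Let $G=(V,E)$ be a finite simple connected graph without isolated vertices which has two different vertices $u$ and $v$ satisfying $N[u]\subseteq N[v]$. Then Dom has a winning strategy in the Dom-start Disjoint Domination Game played on $G$.
   Context: For a vertex $v$, $N[v]$ denotes its closed neighborhood. The Disjoint Domination Game on an isolate-free graph $G$ is played by Dom and Sepy with colors $p$ and $b$; $V_p,V_b$ denote the current sets of vertices of each color. Players alternate; either player may use either color. A move chooses a vertex $v$ and a color $c$ such that (i) $v$ is uncolored and (ii) some $w\in N[v]$ satisfies $N[w]\cap V_c=\emptyset$ (before the move); then $v$ gets color $c$. A player must make a legal move on his turn (no passing). The game ends as soon as either (s* ) some vertex $x$ has $N[x]\subseteq V_p$ or $N[x]\subseteq V_b$ — Sepy wins; or (d* ) both $V_p$ and $V_b$ are dominating sets of $G$ — Dom wins. In the Dom-start game Dom moves first. *)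

From mathcomp Require Import all_boot.
Set Implicit Arguments. Unset Strict Implicit. Unset Printing Implicit Defensive.

Section DDG.
Variables (T : finType) (e : rel T).

Definition Nc (v : T) : {set T} := [set w | (w == v) || e v w].

(* color c: true = p, false = b.  Move (v, c) is legal w.r.t. (Vp, Vb) iff
   v is uncolored and some w in N[v] has N[w] disjoint from V_c. *)
Definition legal (Vp Vb : {set T}) (v : T) (c : bool) : bool :=
  (v \notin Vp :|: Vb) &&
  [exists w in Nc v, [disjoint Nc w & (if c then Vp else Vb)]].

Definition sepy_end (Vp Vb : {set T}) : bool :=
  [exists x, (Nc x \subset Vp) || (Nc x \subset Vb)].

Definition dominating (D : {set T}) : bool :=
  [forall x, ~~ [disjoint Nc x & D]].

Definition dom_end (Vp Vb : {set T}) : bool := dominating Vp && dominating Vb.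

End DDG.

(* DomWins e Vp Vb t : from the position with color classes Vp, Vb and
   Dom to move iff t = true, Dom has a winning strategy. Least fixed point
   (the game is finite). (s-star) is checked first. *)
Inductive DomWins (T : finType) (e : rel T) :
  {set T} -> {set T} -> bool -> Prop :=
| DW_end Vp Vb t :
    ~~ sepy_end e Vp Vb -> dom_end e Vp Vb -> DomWins e Vp Vb t
| DW_dom Vp Vb :
    ~~ sepy_end e Vp Vb -> ~~ dom_end e Vp Vb ->
    (exists (v : T) (c : bool), legal e Vp Vb v c /\
       DomWins e (if c then v |: Vp else Vp) (if c then Vb else v |: Vb) false) ->
    DomWins e Vp Vb true
| DW_sepy Vp Vb :
    ~~ sepy_end e Vp Vb -> ~~ dom_end e Vp Vb ->
    (forall (v : T) (c : bool), legal e Vp Vb v c ->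
       DomWins e (if c then v |: Vp else Vp) (if c then Vb else v |: Vb) true) ->
    DomWins e Vp Vb false.

From mathcomp Require Import all_boot zify.
Set Implicit Arguments. Unset Strict Implicit. Unset Printing Implicit Defensive.

(* Dom first colours v with p and afterwards keeps the position [safe]: the
   colour classes are disjoint, v has colour p, and every coloured vertex sees
   both colours in its closed neighbourhood, except that v may see only p while
   u is uncoloured.  Since N[u] is contained in N[v], every vertex of N[u] sees
   v, so u can only ever receive colour b, and then v sees both colours.  A safe
   position has no monochromatic closed neighbourhood, so Sepy never wins.
   After a move of Sepy only the vertex x he coloured can violate the
   invariant; as N[x] is not monochromatic, Dom repairs it by giving a
   neighbour of x the colour x does not see.  Otherwise Dom colours a new vertex
   so that it sees both colours, found along an edge leaving the coloured part
   (this is where connectivity is used).  Each round colours new vertices, so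
   Dom reaches a position in which both classes dominate. *)

Local Notation colour c X Y := (if c then X else Y).
Local Notation addP c x X := (if c then x |: X else X%SET).
Local Notation addB c x Y := (if c then Y%SET else x |: Y).

Section DisjointDominationGame.
Variables (T : finType) (e : rel T).
Hypothesis e_sym : symmetric e.
Hypothesis e_irr : irreflexive e.
Hypothesis e_conn : forall x y : T, connect e x y.
Hypothesis e_noiso : forall x : T, exists y, e x y.
Implicit Types (S P B : {set T}) (x y z w : T) (c d : bool).

Lemma Nc_refl x : x \in Nc e x.
Proof. by rewrite inE eqxx. Qed.

Lemma Nc_sym x y : (y \in Nc e x) = (x \in Nc e y).
Proof. by rewrite !inE eq_sym e_sym. Qed.

Definition dominated S z := ~~ [disjoint Nc e z & S].

Definition bichromatic P B z := dominated P z && dominated B z.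

Definition monochrome P B z := (Nc e z \subset P) || (Nc e z \subset B).

Lemma dominatedP S z : reflect (exists2 y, y \in Nc e z & y \in S) (dominated S z).
Proof.
rewrite /dominated -setI_eq0; apply: (iffP (set0Pn _)) => [[y /setIP[]]|[y yz yS]].
  by exists y.
by exists y; apply/setIP.
Qed.

Lemma dominatedS S S' z : S \subset S' -> dominated S z -> dominated S' z.
Proof.
by move=> /subsetP sSS' /dominatedP[y yz /sSS' yS']; apply/dominatedP; exists y.
Qed.

Lemma dom_endE P B : dom_end e P B = [forall z, bichromatic P B z].
Proof.
apply/andP/forallP => [[/forallP domP /forallP domB] z|bi].
  by rewrite /bichromatic /dominated domP domB.
by split; apply/forallP => z; have /andP[] := bi z.
Qed.

Lemma setU_paint P B x c : addP c x P :|: addB c x B = x |: (P :|: B).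
Proof. by case: c; rewrite ?setUA // (setUC P). Qed.

Lemma disjoint_paint P B x c : [disjoint P & B] -> x \notin P :|: B ->
  [disjoint addP c x P & addB c x B].
Proof.
rewrite inE negb_or => dPB /andP[xP xB].
have add1 (A A' : {set T}) : x \notin A' -> [disjoint A & A'] -> [disjoint x |: A & A'].
  by rewrite !disjoints_subset subUset sub1set inE => ->.
by case: c; rewrite ?add1 // disjoint_sym add1 // disjoint_sym.
Qed.

Lemma bichromaticS P B x c z : bichromatic P B z ->
  bichromatic (addP c x P) (addB c x B) z.
Proof.
by case/andP => domP domB; apply/andP; case: c; split => //;
  apply: dominatedS (subsetUr _ _) _.
Qed.

Lemma bichromatic_paint P B x c z t : x \in Nc e t -> z \in Nc e t ->
  z \in colour c B P -> bichromatic (addP c x P) (addB c x B) t.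
Proof.
move=> xt zt zS; apply/andP.
by case: c zS => zS; split; apply/dominatedP;
  [exists x; rewrite ?setU11 | exists z | exists z | exists x; rewrite ?setU11].
Qed.

Lemma legalP P B x c : reflect
  (x \notin P :|: B /\ exists2 w, w \in Nc e x & ~~ dominated (colour c P B) w)
  (legal e P B x c).
Proof.
apply: (iffP andP) => [[xPB /exists_inP[w wx dw]]|[xPB [w wx dw]]].
  by split => //; exists w; rewrite // /dominated negbK.
by split => //; apply/exists_inP; exists w; rewrite // /dominated negbK in dw.
Qed.

Lemma no_sepy_end P B :
  {in P :|: B, forall x, ~~ monochrome P B x} -> ~~ sepy_end e P B.
Proof.
move=> nmono; apply/existsP => -[x monox].
have xPB : x \in P :|: B.
  by rewrite inE; case/orP: monox => /subsetP/(_ x (Nc_refl x)) ->; rewrite ?orbT.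
by move: monox; apply/negP; apply: nmono.
Qed.

Lemma bichromatic_not_monochrome P B z : [disjoint P & B] ->
  bichromatic P B z -> ~~ monochrome P B z.
Proof.
move=> dPB /andP[/dominatedP[y yz yP] /dominatedP[w wz wB]].
apply/norP; split; apply/negP => /subsetP sub.
  by rewrite (disjointFr dPB (sub w wz)) in wB.
by rewrite (disjointFl dPB (sub y yz)) in yP.
Qed.

Lemma Nc_subsetU1_dominated S x w : Nc e x \subset x |: S -> w \in Nc e x ->
  dominated S w.
Proof.
move=> /subsetP sub wx; apply/dominatedP; have [->|wNx] := eqVneq w x.
  have [y xy] := e_noiso x; have yx : y \in Nc e x by rewrite inE xy orbT.
  exists y => //; case/setU1P: (sub y yx) => // eq_yx.
  by rewrite eq_yx e_irr in xy.
by exists w; [exact: Nc_refl | case/setU1P: (sub w wx) => // /eqP; rewrite (negPf wNx)].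
Qed.

Lemma legal_not_monochrome P B x c : legal e P B x c ->
  ~~ monochrome (addP c x P) (addB c x B) x.
Proof.
move=> /legalP[]; rewrite inE negb_or => /andP[xP xB] [w wx ndw].
have not_sub S : x \notin S -> ~~ (Nc e x \subset S).
  by apply: contra => /subsetP; apply; exact: Nc_refl.
have not_subU1 S : ~~ dominated S w -> ~~ (Nc e x \subset x |: S).
  by apply: contra => /Nc_subsetU1_dominated; apply.
by case: c ndw => ndw; rewrite negb_or not_subU1 ?not_sub.
Qed.

Lemma boundary_edge S x w0 : x \in S -> ~~ dominated S w0 ->
  exists w y, [/\ ~~ dominated S w, e w y & dominated S y].
Proof.
move=> xS ndw0.
have [/existsP[w /existsP[y /and3P[]]]|no_edge] :=
  boolP [exists w, exists y, [&& ~~ dominated S w, e w y & dominated S y]].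
  by exists w, y.
have closedS : closed e [set w | ~~ dominated S w].
  move=> w y wy; rewrite !inE; apply/idP/idP => nd; apply/negP => d; case/negP: no_edge.
    by apply/existsP; exists w; apply/existsP; exists y; rewrite nd wy d.
  by apply/existsP; exists y; apply/existsP; exists w; rewrite nd e_sym wy d.
have := closed_connect closedS (e_conn w0 x); rewrite !inE ndw0 => /esym/negP[].
by apply/dominatedP; exists x; first exact: Nc_refl.
Qed.

Lemma mem_colour P B x : x \in P :|: B -> x \in colour (x \in P) P B.
Proof. by case: (boolP (x \in P)) => //= xP; rewrite inE (negPf xP). Qed.

Lemma bichromatic_colour P B c z : dominated (colour c P B) z ->
  dominated (colour (~~ c) P B) z -> bichromatic P B z.
Proof. by case: c => dz dz'; apply/andP. Qed.

Lemma paint_opposite P B c y z w : z \in colour c P B -> z \in Nc e y ->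
    w \in Nc e y -> y \notin P :|: B -> ~~ dominated (colour (~~ c) P B) w ->
  legal e P B y (~~ c) /\ bichromatic (addP (~~ c) y P) (addB (~~ c) y B) y.
Proof.
move=> zS zy wy yPB ndw; split; first by apply/legalP; split; last exists w.
by apply: bichromatic_paint zy _; [exact: Nc_refl | case: c zS {ndw}].
Qed.

Lemma bichromatic_extension P B x : x \in P :|: B -> ~~ dom_end e P B ->
    {in P :|: B, forall z, bichromatic P B z} ->
  exists y d, legal e P B y d /\ bichromatic (addP d y P) (addB d y B) y.
Proof.
rewrite dom_endE => xPB /forallPn[w0 nbw0] biPB.
have w0PB : w0 \notin P :|: B by apply: contra nbw0; apply: biPB.
have [/dominatedP[z zw0 zPB]|ndw0] := boolP (dominated (P :|: B) w0).
  have zS := mem_colour zPB.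
  exists w0, (~~ (z \in P)); apply: (paint_opposite zS) => //; first exact: Nc_refl.
  apply: contra nbw0; apply: bichromatic_colour.
  by apply/dominatedP; exists z.
have [w [y [ndw wy dy]]] := boundary_edge xPB ndw0.
have [z zy zPB] := dominatedP _ _ dy.
have yw : y \in Nc e w by rewrite inE wy orbT.
have yPB : y \notin P :|: B.
  by apply: contra ndw => yPB; apply/dominatedP; exists y.
exists y, (~~ (z \in P)); apply: (paint_opposite (mem_colour zPB) zy (w := w)) => //.
  by rewrite Nc_sym.
apply: contra ndw; apply: dominatedS.
by case: (z \in P); [exact: subsetUr | exact: subsetUl].
Qed.

Lemma dominated0 z : dominated set0 z = false.
Proof. by apply/dominatedP => -[y _]; rewrite inE. Qed.

Lemma card_setC_setU1 S x y : x \notin S -> #|~: (y |: (x |: S))| < #|~: S|.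
Proof.
move=> xS; have := cardsC S; have := cardsC (y |: (x |: S)).
by rewrite !cardsU1 xS; case: (y \notin x |: S) => /=; lia.
Qed.

Variables u v : T.
Hypothesis Nu_sub_Nv : Nc e u \subset Nc e v.

Lemma u_in_Nv : u \in Nc e v.
Proof. exact: subsetP Nu_sub_Nv u (Nc_refl u). Qed.

Lemma v_in_Nu : v \in Nc e u.
Proof. by rewrite Nc_sym u_in_Nv. Qed.

Lemma bichromatic_v_paint_u P B : v \in P -> bichromatic P (u |: B) v.
Proof. by move=> vP; apply: (bichromatic_paint (c := false) u_in_Nv (Nc_refl v)). Qed.

Lemma u_not_legal_p P B : v \in P -> ~~ legal e P B u true.
Proof.
move=> vP; apply/negP => /legalP[_ [w wu /negP[]]]; apply/dominatedP; exists v => //.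
by rewrite Nc_sym (subsetP Nu_sub_Nv).
Qed.

(* The exception for v is what makes Dom's first move possible: u in N[v]
   stays uncoloured, so N[v] is not monochromatic. *)
Definition secure P B z := bichromatic P B z || (z == v) && (u \notin P :|: B).

Definition safe_but x P B := [/\ [disjoint P & B], v \in P &
  {in P :|: B, forall z, z != x -> secure P B z}].

Definition safe P B := [/\ [disjoint P & B], v \in P &
  {in P :|: B, forall z, secure P B z}].

Lemma secure_not_monochrome P B z : [disjoint P & B] -> secure P B z ->
  ~~ monochrome P B z.
Proof.
move=> dPB /orP[/(bichromatic_not_monochrome dPB)//|/andP[/eqP-> uPB]].
apply/norP; split; apply: contra uPB => /subsetP/(_ u u_in_Nv) uS.
  by rewrite inE uS.
by rewrite inE uS orbT.
Qed.

Lemma safe_not_sepy_end P B : safe P B -> ~~ sepy_end e P B.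
Proof.
case=> dPB _ secPB; apply: no_sepy_end => z /secPB.
exact: secure_not_monochrome.
Qed.

Lemma secure_paint P B y d z : secure P B z ->
    (y = u -> z = v -> bichromatic (addP d y P) (addB d y B) v) ->
  secure (addP d y P) (addB d y B) z.
Proof.
case/orP => [biz _|/andP[/eqP zv uPB] biv]; first by rewrite /secure bichromaticS.
have [yu|nyu] := eqVneq y u; first by rewrite /secure zv (biv yu zv).
by rewrite /secure zv eqxx setU_paint in_setU1 eq_sym (negPf nyu) uPB orbT.
Qed.

Lemma safe_paint x P B y d : safe_but x P B -> y \notin P :|: B ->
    secure (addP d y P) (addB d y B) x -> secure (addP d y P) (addB d y B) y ->
    (y = u -> bichromatic (addP d y P) (addB d y B) v) ->
  safe (addP d y P) (addB d y B).
Proof.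
case=> dPB vP secPB yPB secx secy biv; split; first exact: disjoint_paint.
  by case: d {secx secy biv}; rewrite ?in_setU1 vP ?orbT.
move=> z; rewrite setU_paint => /setU1P[->|zPB] //.
have [->|nzx] := eqVneq z x; first by [].
by apply: secure_paint (secPB z zPB nzx) _ => yu _; apply: biv.
Qed.

Lemma sepy_move_safe_but P B x c : safe P B -> legal e P B x c ->
  safe_but x (addP c x P) (addB c x B).
Proof.
case=> dPB vP secPB lg; have /legalP[xPB _] := lg; split; first exact: disjoint_paint.
  by case: c {lg}; rewrite ?in_setU1 vP ?orbT.
move=> z; rewrite setU_paint => /setU1P[->|zPB]; first by rewrite eqxx.
move=> _; apply: secure_paint (secPB z zPB) _ => xu _.
case: c lg => [|_]; first by rewrite xu (negPf (u_not_legal_p B vP)).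
by rewrite xu; apply: bichromatic_v_paint_u.
Qed.

Lemma sepy_move_not_sepy_end P B x c : safe P B -> legal e P B x c ->
  ~~ sepy_end e (addP c x P) (addB c x B).
Proof.
move=> safePB lg; have [dPB' _ secPB'] := sepy_move_safe_but safePB lg.
apply: no_sepy_end => z zPB'; have [->|nzx] := eqVneq z x.
  exact: legal_not_monochrome.
exact/secure_not_monochrome/secPB'.
Qed.

Lemma safe_repair P B x c : safe_but x P B -> x \in colour c P B ->
    ~~ dominated (colour (~~ c) P B) x -> ~~ sepy_end e P B ->
  exists y, legal e P B y (~~ c) /\ safe (addP (~~ c) y P) (addB (~~ c) y B).
Proof.
move=> safePB xS ndx nse; have [_ vP _] := safePB.
have /subsetPn[y yx ySc] : ~~ (Nc e x \subset colour c P B).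
  apply: contra nse => sub; apply/existsP; exists x.
  by case: c {xS ndx} sub => ->; rewrite ?orbT.
have ySc' : y \notin colour (~~ c) P B.
  by apply: contra ndx => yS; apply/dominatedP; exists y.
have yPB : y \notin P :|: B.
  by case: c {xS ndx} ySc ySc' => /= ySc ySc'; rewrite inE negb_or ySc ySc'.
have xSc : x \in colour (~~ c) B P by case: c xS {ndx ySc ySc' yPB}.
exists y; split.
  by apply/legalP; split; last by exists x; rewrite // Nc_sym.
apply: (safe_paint (x := x)) => //.
- by apply/orP; left; apply: bichromatic_paint yx (Nc_refl x) xSc.
- by apply/orP; left; apply: bichromatic_paint (Nc_refl y) _ xSc; rewrite Nc_sym.
move=> yu; case: c {xS ySc ySc' yPB} ndx xSc => /= ndx xB.
  by rewrite yu; apply: bichromatic_v_paint_u.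
case/negP: ndx; apply/dominatedP; exists v => //.
by rewrite Nc_sym (subsetP Nu_sub_Nv) // -yu Nc_sym.
Qed.

Lemma safe_extension P B : safe P B -> ~~ dom_end e P B ->
  exists y d, legal e P B y d /\ safe (addP d y P) (addB d y B).
Proof.
move=> safePB nde; have [dPB vP secPB] := safePB.
have safe_but_y y : safe_but y P B by split=> // z zPB _; apply: secPB.
have [biv_or_u|] := boolP (bichromatic P B v || (u \in P :|: B)).
  have biPB : {in P :|: B, forall z, bichromatic P B z}.
    move=> z /secPB /orP[//|/andP[/eqP-> uPB]].
    by case/orP: biv_or_u; rewrite // (negPf uPB).
  have vPB : v \in P :|: B by rewrite inE vP.
  have [y [d [lg biy]]] := bichromatic_extension vPB nde biPB.
  have /legalP[yPB _] := lg.
  exists y, d; split => //; apply: (safe_paint (safe_but_y y)); rewrite /secure ?biy //.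
  move=> yu; case/orP: biv_or_u => [/bichromaticS//|]; by rewrite -yu (negPf yPB).
rewrite negb_or => /andP[nbiv uPB].
have ndv : ~~ dominated B v.
  apply: contra nbiv; apply: (bichromatic_colour (c := true)).
  by apply/dominatedP; exists v; rewrite ?Nc_refl.
have biu : bichromatic P (u |: B) u.
  exact: (bichromatic_paint (c := false) (Nc_refl u) v_in_Nu).
exists u, false; split.
  by apply/legalP; split; last by exists v; first exact: v_in_Nu.
apply: (safe_paint (safe_but_y u) (d := false)); rewrite /secure ?biu // => _.
exact: bichromatic_v_paint_u.
Qed.

Lemma dom_reply P B x : safe_but x P B -> x \in P :|: B ->
    ~~ sepy_end e P B -> ~~ dom_end e P B ->
  exists y d, legal e P B y d /\ safe (addP d y P) (addB d y B).
Proof.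
move=> safePB xPB nse nde; have [dPB vP secPB] := safePB.
have [secx|insecx] := boolP (secure P B x).
  apply: safe_extension nde; split=> // z zPB.
  by have [->|] := eqVneq z x; last exact: secPB.
have xS := mem_colour xPB.
have ndx : ~~ dominated (colour (~~ (x \in P)) P B) x.
  apply: contra insecx => dx; apply/orP; left; apply: bichromatic_colour dx.
  by apply/dominatedP; exists x; rewrite ?Nc_refl.
have [y [lg safe']] := safe_repair safePB xS ndx nse.
by exists y, (~~ (x \in P)).
Qed.

Lemma safe_DomWins P B : safe P B -> DomWins e P B false.
Proof.
have [n] := ubnP #|~: (P :|: B)|; elim: n P B => // n IH P B lt_n safePB.
have nse := safe_not_sepy_end safePB.
have [de|nde] := boolP (dom_end e P B); first exact: DW_end.
apply: DW_sepy => //.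
move=> x c lg; have /legalP[xPB _] := lg.
have nse' := sepy_move_not_sepy_end safePB lg.
have [de'|nde'] := boolP (dom_end e (addP c x P) (addB c x B)).
  exact: DW_end.
apply: DW_dom => //.
have xPB' : x \in addP c x P :|: addB c x B by rewrite setU_paint setU11.
have [y [d [lg' safe']]] :=
  dom_reply (sepy_move_safe_but safePB lg) xPB' nse' nde'.
exists y, d; split => //; apply: IH safe'; rewrite !setU_paint.
exact: leq_trans (card_setC_setU1 _ xPB) lt_n.
Qed.

End DisjointDominationGame.

Theorem theorem8 (T : finType) (e : rel T) :
  symmetric e -> irreflexive e ->
  (forall x y : T, connect e x y) ->
  (forall x : T, exists y : T, e x y) ->
  forall u v : T, u != v -> Nc e u \subset Nc e v ->
  DomWins e set0 set0 true.
Proof.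
move=> e_sym e_irr e_conn e_noiso u v neq_uv Nu_sub_Nv.
apply: DW_dom.
- by apply: no_sepy_end => x; rewrite !inE.
- by rewrite dom_endE; apply/forallPn; exists u; rewrite /bichromatic dominated0.
exists v, true; split.
  by apply/legalP; split; [rewrite !inE | exists v; rewrite ?Nc_refl ?dominated0].
apply: (safe_DomWins e_sym e_irr e_conn e_noiso Nu_sub_Nv).
split; rewrite ?setU11 //; first by rewrite disjoints_subset setC0 subsetT.
move=> z; rewrite !setU0 => /set1P->; rewrite /secure eqxx !setU0 in_set1.
by rewrite (negPf neq_uv) orbT.
Qed.
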